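(* Let $t_1\ge 0$, let $t_2=0$ or $t_2\ge 2$, and let $t_3\ge 0$ be integers. Then $\rho(F_1(t_1,t_2,t_3))<\rho(F_0(t_1+1,t_2+1,t_3))$. (Both graphs have the same number of edges, namely $3t_1+2t_2+2t_3+7$ if $t_3\ge1$ and $3t_1+2t_2+5$ if $t_3=0$.)
   Context: $\rho(G)$ denotes the largest eigenvalue of the adjacency matrix of $G$. For integers $t_1,t_2,t_3\ge 0$, the graph $F_0(t_1,t_2,t_3)$ is defined as follows. It has a central vertex $u^*$. (a) For each $i=1,\dots,t_1$ there are two vertices $a_i,b_i$ forming a triangle $u^*a_ib_i$. (b) If $t_2\ge 1$, there are vertices $v,u_1,\dots,u_{t_2}$ with each $u_j$ adjacent to both $u^*$ and $v$ (so these form a $K_{2,t_2}$ in which $u^*$ is a vertex of the 2-element side). (c) If $t_3\ge 1$, there are vertices $v_1',v_2'$, both adjacent to $u^*$, and vertices $v_1,\dots,v_{t_3}$, each adjacent to both $v_1'$ and $v_2'$ (so these form a $K_{2,t_3+1}$ attached at the vertex $u^*$ of its $(t_3+1)$-element side). There are no other vertices or edges; the three parts share only $u^*$. Thus $F_0(t_1,t_2,t_3)$ has $3t_1+2t_2$ edges if $t_3=0$ and $3t_1+2t_2+2t_3+2$ edges if $t_3\ge1$. The graph $F_1(t_1,t_2,t_3)$ is obtained from $F_0(t_1,t_2,t_3)$ by adding four new vertices $w_1,w_2,w_3,w_4$ and the edges $u^*w_3,w_3w_1,w_1w_2,w_2w_4,w_4u^*$, i.e. attaching a 5-cycle at $u^*$.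 *)

From HB Require Import structures.
From mathcomp Require Import all_boot all_order all_algebra.
From mathcomp Require Import reals.
Set Implicit Arguments. Unset Strict Implicit. Unset Printing Implicit Defensive.
Import Order.TTheory GRing.Theory Num.Theory.
Local Open Scope ring_scope.

(* A simple graph on vertex set {0,...,n-1} given by an edge list (pairs of
   distinct vertex labels, no loops); its adjacency matrix over R. *)
Definition adj_mx (R : nzRingType) (n : nat) (E : seq (nat * nat)) : 'M[R]_n :=
  \matrix_(i < n, j < n)
    (if ((i : nat), (j : nat)) \in E then 1 else if ((j : nat), (i : nat)) \in E then 1 else 0).

Definition is_largest_eigenvalue (R : realType) (n : nat) (A : 'M[R]_n) (r : R) : Prop :=
  eigenvalue A r /\ (forall x : R, eigenvalue A x -> x <= r).

(* Vertex numbering of F_0(t1,t2,t3):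
     0                    = u*
     1 + 2i, 2 + 2i       = a_i, b_i         (i < t1)
   let B := 1 + 2 t1; if t2 >= 1:
     B                    = v
     B + 1 + j            = u_j              (j < t2)
   let C := B + (t2 + 1 if t2 >= 1 else 0); if t3 >= 1:
     C, C + 1             = v1', v2'
     C + 2 + k            = v_k              (k < t3)                      *)
Definition F0_B (t1 : nat) : nat := (1 + 2 * t1)%N.
Definition F0_C (t1 t2 : nat) : nat :=
  (F0_B t1 + (if (0 < t2)%N then t2 + 1 else 0))%N.
Definition F0_n (t1 t2 t3 : nat) : nat :=
  (F0_C t1 t2 + (if (0 < t3)%N then t3 + 2 else 0))%N.

Definition F0_edges (t1 t2 t3 : nat) : seq (nat * nat) :=
  let ustar := 0%N in
  let a i := (1 + 2 * i)%N in
  let b i := (2 + 2 * i)%N in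
  let v := F0_B t1 in
  let u j := (F0_B t1 + 1 + j)%N in
  let v1' := F0_C t1 t2 in
  let v2' := (F0_C t1 t2 + 1)%N in
  let vk k := (F0_C t1 t2 + 2 + k)%N in
  (* (a) triangles u* a_i b_i *)
  [seq (ustar, a i) | i <- iota 0 t1] ++
  [seq (ustar, b i) | i <- iota 0 t1] ++
  [seq (a i, b i) | i <- iota 0 t1] ++
  (* (b) K_{2,t2} with parts {u*, v} and {u_1..u_t2} *)
  (if (0 < t2)%N then
     [seq (ustar, u j) | j <- iota 0 t2] ++ [seq (v, u j) | j <- iota 0 t2]
   else [::]) ++
  (* (c) K_{2,t3+1} with parts {v1', v2'} and {u*, v_1..v_t3} *)
  (if (0 < t3)%N then
     [:: (ustar, v1'); (ustar, v2')] ++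
     [seq (v1', vk k) | k <- iota 0 t3] ++ [seq (v2', vk k) | k <- iota 0 t3]
   else [::]).

(* F_1(t1,t2,t3): F_0 plus new vertices w1,w2,w3,w4 numbered
   D, D+1, D+2, D+3 with D := F0_n t1 t2 t3, and the 5-cycle
   u* w3 w1 w2 w4 u*. *)
Definition F1_n (t1 t2 t3 : nat) : nat := (F0_n t1 t2 t3 + 4)%N.

Definition F1_edges (t1 t2 t3 : nat) : seq (nat * nat) :=
  let D := F0_n t1 t2 t3 in
  let w1 := D in let w2 := (D + 1)%N in let w3 := (D + 2)%N in let w4 := (D + 3)%N in
  F0_edges t1 t2 t3 ++ [:: (0%N, w3); (w3, w1); (w1, w2); (w2, w4); (w4, 0%N)].

Definition A_F0 (R : nzRingType) (t1 t2 t3 : nat) : 'M[R]_(F0_n t1 t2 t3) :=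
  adj_mx R (F0_n t1 t2 t3) (F0_edges t1 t2 t3).
Definition A_F1 (R : nzRingType) (t1 t2 t3 : nat) : 'M[R]_(F1_n t1 t2 t3) :=
  adj_mx R (F1_n t1 t2 t3) (F1_edges t1 t2 t3).

(* Both graphs belong to the family G(t1,t2,t3,pent): F_0(t1,t2,t3), with a
   pentagon attached at u* when [pent] holds.  Each branch at u* (triangle,
   K_{2,t2}, K_{2,t3+1}, pentagon) is symmetric, so we look for a Perron
   vector that is constant on the vertex classes (equitable partition).
   Solving the quotient equations of the classes for an eigenvalue x leaves
   one equation at u*, namely x = secular(x) with
     secular(x) = 2 t1/(x-1) + t2 x/(x^2-t2) + [t3>0] 2x/(x^2-2t3)
                  + [pent] 2(x-1)/(x^2-x-1).  For x >= 2, replacing the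
      pentagon of F_1(t1,t2,t3) by a triangle and a spoke of the K_{2,t2}
      strictly increases secular (this needs x^2 > t2 + 1, whence t2 <> 1).
   4. The theorem: with rho1 the fixed point for F_1, the secular function of
      F_0(t1+1,t2+1,t3) exceeds rho1 at rho1, so its fixed point rho0 lies
      strictly above rho1. *)

From HB Require Import structures.
From mathcomp Require Import all_boot all_order all_algebra.
From mathcomp Require Import reals.
From mathcomp Require Import zify ring lra.
Set Implicit Arguments. Unset Strict Implicit. Unset Printing Implicit Defensive.
Import Order.TTheory GRing.Theory Num.Theory.

Definition G_n (t1 t2 t3 : nat) (pent : bool) : nat :=
  if pent then F1_n t1 t2 t3 else F0_n t1 t2 t3.

Definition G_edges (t1 t2 t3 : nat) (pent : bool) : seq (nat * nat) :=
  if pent then F1_edges t1 t2 t3 else F0_edges t1 t2 t3.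

Definition pent_size (pent : bool) : nat := if pent then 4 else 0.

Lemma G_nE t1 t2 t3 pent : G_n t1 t2 t3 pent = F0_n t1 t2 t3 + pent_size pent.
Proof. by case: pent; rewrite /= ?addn0. Qed.

Lemma G_n_gt0 t1 t2 t3 pent : (0 < G_n t1 t2 t3 pent)%N.
Proof. by rewrite G_nE /F0_n /F0_C /F0_B -!addnA. Qed.

Definition adjacent (E : seq (nat * nat)) (i j : nat) : bool :=
  ((i, j) \in E) || ((j, i) \in E).

Lemma mem_map_iota_pair (f g : nat -> nat) t x y (Q : bool) (k0 : nat) :
  (Q -> [&& k0 < t, x == f k0 & y == g k0]) ->
  (forall k, k < t -> x = f k -> y = g k -> Q) ->
  ((x, y) \in [seq (f k, g k) | k <- iota 0 t]) = Q.
Proof.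
move=> HQ Hk; apply/mapP/idP.
  by case=> k; rewrite mem_iota add0n => /andP[_ kt] [xE yE]; apply: (Hk k).
move=> /HQ /and3P[kt /eqP -> /eqP ->]; exists k0 => //.
by rewrite mem_iota add0n.
Qed.

Definition F0_edge (t1 t2 t3 : nat) (x y : nat) : bool :=
  let B := F0_B t1 in let C := F0_C t1 t2 in
  [&& x == 0, y %% 2 == 1 & 1 <= y < 1 + 2 * t1] ||
  ([&& x == 0, y %% 2 == 0 & 2 <= y < 2 + 2 * t1] ||
  ([&& x %% 2 == 1, 1 <= x < 1 + 2 * t1 & y == x.+1] ||
  (([&& 0 < t2, x == 0 & B + 1 <= y < B + 1 + t2] ||
    [&& 0 < t2, x == B & B + 1 <= y < B + 1 + t2]) ||
  ([&& 0 < t3, x == 0 & y == C] || ([&& 0 < t3, x == 0 & y == C + 1] ||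
   ([&& 0 < t3, x == C & C + 2 <= y < C + 2 + t3] ||
    [&& 0 < t3, x == C + 1 & C + 2 <= y < C + 2 + t3])))))).

Lemma mem_F0_edges t1 t2 t3 x y :
  ((x, y) \in F0_edges t1 t2 t3) = F0_edge t1 t2 t3 x y.
Proof.
rewrite /F0_edges /F0_edge /= !mem_cat.
rewrite (@mem_map_iota_pair _ _ _ _ _ [&& x == 0, y %% 2 == 1 & 1 <= y < 1 + 2 * t1]
  (y %/ 2)); [|lia|move=> k ? -> ->; lia].
rewrite (@mem_map_iota_pair _ _ _ _ _ [&& x == 0, y %% 2 == 0 & 2 <= y < 2 + 2 * t1]
  (y %/ 2 - 1)); [|lia|move=> k ? -> ->; lia].
rewrite (@mem_map_iota_pair _ _ _ _ _ [&& x %% 2 == 1, 1 <= x < 1 + 2 * t1 & y == x.+1]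
  (x %/ 2)); [|lia|move=> k ? -> ->; lia].
congr (_ || (_ || (_ || (_ || _)))).
  case: (posnP t2) => [->|t2p] //=; rewrite mem_cat.
  by congr (_ || _); apply: (@mem_map_iota_pair _ _ _ _ _ _ (y - F0_B t1 - 1));
    [lia|move=> k ? -> ->; lia|lia|move=> k ? -> ->; lia].
case: (posnP t3) => [->|t3p] //=.
rewrite !in_cons !mem_cat !xpair_eqE.
by congr (_ || (_ || (_ || _))); apply: (@mem_map_iota_pair _ _ _ _ _ _ (y - F0_C t1 t2 - 2));
  [lia|move=> k ? -> ->; lia|lia|move=> k ? -> ->; lia].
Qed.

Definition pentagon_edge (N : nat) (x y : nat) : bool :=
  [|| (x == 0) && (y == N + 2), (x == N + 2) && (y == N), (x == N) && (y == N + 1),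
      (x == N + 1) && (y == N + 3) | (x == N + 3) && (y == 0)].

Lemma mem_G_edges t1 t2 t3 pent x y :
  ((x, y) \in G_edges t1 t2 t3 pent) =
  F0_edge t1 t2 t3 x y || pent && pentagon_edge (F0_n t1 t2 t3) x y.
Proof.
case: pent; rewrite /G_edges /= ?orbF -?mem_F0_edges //.
by rewrite /F1_edges mem_cat !in_cons !xpair_eqE in_nil orbF.
Qed.

Lemma F0_layout t1 t2 t3 :
  [/\ F0_B t1 = 1 + 2 * t1,
      (t2 == 0) && (F0_C t1 t2 == F0_B t1) || (0 < t2) && (F0_C t1 t2 == F0_B t1 + t2 + 1) &
      (t3 == 0) && (F0_n t1 t2 t3 == F0_C t1 t2) ||
      (0 < t3) && (F0_n t1 t2 t3 == F0_C t1 t2 + t3 + 2)].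
Proof. by rewrite /F0_n /F0_C /F0_B; split => //; case: t2 => [|?]; case: t3 => [|?] /=; lia. Qed.

(* Arithmetic on vertex labels only depends on the layout constants, so we
   replace them by variables constrained by [F0_layout] before calling lia. *)
Ltac generalize_layout t1 t2 t3 :=
  have := F0_layout t1 t2 t3;
  move: (F0_n t1 t2 t3) (F0_C t1 t2) (F0_B t1) => N C B [? ? ?].

Ltac abstract_layout t1 t2 t3 :=
  rewrite ?G_nE /pent_size /F0_edge /pentagon_edge; generalize_layout t1 t2 t3.

Ltac split_hyps := repeat match goal with
  | H : is_true (_ || _) |- _ => case/orP: H => H
  | H : is_true (_ && _) |- _ => case/andP: H => ? H
  end.

Ltac prove_disj := lazymatch goal with
  | |- is_true (_ || _) => first [apply/orP; left; prove_disj | apply/orP; right; prove_disj]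
  | _ => lia end.

Ltac layout_lia t1 t2 t3 :=
  repeat match goal with H : is_true _ |- _ => revert H end;
  rewrite ?G_nE /pent_size; generalize_layout t1 t2 t3;
  repeat match goal with |- context [if ?b then _ else _] => case: b end;
  move=> *; split_hyps; lia.

(* Decides an equivalence between boolean combinations of linear constraints
   on labels, after splitting on the parity of [x] (triangles pair 2i+1 with
   2i+2). *)
Ltac decide_adjacency x :=
  (have [?|?] : (x %% 2 == 1) \/ (x %% 2 == 0) by lia);
  apply/idP/idP => ?; split_hyps; prove_disj.

Lemma G_adjacent_lt t1 t2 t3 pent i j :
  adjacent (G_edges t1 t2 t3 pent) i j -> j < G_n t1 t2 t3 pent.
Proof.
rewrite /adjacent !mem_G_edges; abstract_layout t1 t2 t3.
by case: pent => /= ?; split_hyps; lia.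
Qed.

Definition opt_pair (b : bool) (x : nat) : seq nat := if b then [:: x; x + 1] else [::].

Lemma mem_opt_pair b x j : (j \in opt_pair b x) = b && ((j == x) || (j == x + 1)).
Proof. by case: b; rewrite /opt_pair ?in_cons ?in_nil ?orbF. Qed.

Lemma uniq_opt_pair b x : uniq (opt_pair b x).
Proof. by case: b => //=; rewrite inE andbT; lia. Qed.

(* Neighbourhoods in G of the vertices of F_0, as explicit lists, one lemma
   per vertex class: the centre u*, the triangle vertices a_i, b_i, the hub v
   and the spokes u_j of the K_{2,t2}, the poles v'_1, v'_2 and the leaves
   v_k of the K_{2,t3+1}. *)
Section Neighbourhoods.
Variables (t1 t2 t3 : nat) (pent : bool).
Local Notation adj := (adjacent (G_edges t1 t2 t3 pent)).
Local Notation B := (F0_B t1).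
Local Notation C := (F0_C t1 t2).
Local Notation N := (F0_n t1 t2 t3).

Lemma nbr_center j :
  (j \in iota 1 (2 * t1) ++ iota (B + 1) t2 ++ opt_pair (0 < t3) C ++ opt_pair pent (N + 2))
  = adj 0 j.
Proof.
rewrite /adjacent !mem_G_edges !mem_cat !mem_iota !mem_opt_pair.
by abstract_layout t1 t2 t3; case: pent => /=; decide_adjacency j.
Qed.

(* a_i and b_i, with labels 2i+1 and 2i+2, are adjacent to u* and each other. *)
Lemma nbr_triangle i j : 0 < i < B -> (j \in [:: 0; i + 2 * (i %% 2) - 1]) = adj i j.
Proof.
rewrite /adjacent !mem_G_edges !in_cons in_nil.
by abstract_layout t1 t2 t3; case: pent => /= ?; decide_adjacency i.
Qed.

Lemma nbr_hub j : 0 < t2 -> (j \in iota (B + 1) t2) = adj B j.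
Proof.
rewrite /adjacent !mem_G_edges mem_iota.
by abstract_layout t1 t2 t3; case: pent => /= ?; decide_adjacency j.
Qed.

Lemma nbr_spoke i j : B < i < C -> (j \in [:: 0; B]) = adj i j.
Proof.
rewrite /adjacent !mem_G_edges !in_cons in_nil.
by abstract_layout t1 t2 t3; case: pent => /= ?; decide_adjacency i.
Qed.

Lemma nbr_pole i j : 0 < t3 -> C <= i < C + 2 -> (j \in 0 :: iota (C + 2) t3) = adj i j.
Proof.
rewrite /adjacent !mem_G_edges in_cons mem_iota.
abstract_layout t1 t2 t3; case: pent => /= ? ?;
  (have : (i == C) || (i == C + 1) by lia) => ?; split_hyps; decide_adjacency i.
Qed.

Lemma nbr_leaf i j : C + 2 <= i < N -> (j \in [:: C; C + 1]) = adj i j.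
Proof.
rewrite /adjacent !mem_G_edges !in_cons in_nil.
by abstract_layout t1 t2 t3; case: pent => /= ?; decide_adjacency i.
Qed.

End Neighbourhoods.

Section PentagonNeighbourhoods.
Variables (t1 t2 t3 : nat).
Local Notation adj := (adjacent (G_edges t1 t2 t3 true)).
Local Notation N := (F0_n t1 t2 t3).

Lemma nbr_w1 j : (j \in [:: N + 1; N + 2]) = adj N j.
Proof.
rewrite /adjacent !mem_G_edges !in_cons in_nil /=.
by abstract_layout t1 t2 t3; decide_adjacency j.
Qed.

Lemma nbr_w2 j : (j \in [:: N; N + 3]) = adj (N + 1) j.
Proof.
rewrite /adjacent !mem_G_edges !in_cons in_nil /=.
by abstract_layout t1 t2 t3; decide_adjacency j.
Qed.

Lemma nbr_w3 j : (j \in [:: 0; N]) = adj (N + 2) j.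
Proof.
rewrite /adjacent !mem_G_edges !in_cons in_nil /=.
by abstract_layout t1 t2 t3; decide_adjacency j.
Qed.

Lemma nbr_w4 j : (j \in [:: 0; N + 1]) = adj (N + 3) j.
Proof.
rewrite /adjacent !mem_G_edges !in_cons in_nil /=.
by abstract_layout t1 t2 t3; decide_adjacency j.
Qed.

End PentagonNeighbourhoods.

(* The vertex classes of G, on which the Perron vector will be constant. *)
Variant vertex_class (t1 t2 t3 : nat) (pent : bool) (i : nat) : Prop :=
  | CenterVertex of i = 0
  | TriangleVertex of 0 < i < F0_B t1
  | HubVertex of 0 < t2 & i = F0_B t1
  | SpokeVertex of F0_B t1 < i < F0_C t1 t2
  | PoleVertex of 0 < t3 & F0_C t1 t2 <= i < F0_C t1 t2 + 2
  | LeafVertex of F0_C t1 t2 + 2 <= i < F0_n t1 t2 t3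
  | PentagonVertex of pent & F0_n t1 t2 t3 <= i < F0_n t1 t2 t3 + 4.

Lemma vertex_classP t1 t2 t3 pent i : i < G_n t1 t2 t3 pent -> vertex_class t1 t2 t3 pent i.
Proof.
move=> i_lt.
have : [|| i == 0, 0 < i < F0_B t1, (0 < t2) && (i == F0_B t1), F0_B t1 < i < F0_C t1 t2,
   (0 < t3) && (F0_C t1 t2 <= i < F0_C t1 t2 + 2), F0_C t1 t2 + 2 <= i < F0_n t1 t2 t3 |
   pent && (F0_n t1 t2 t3 <= i < F0_n t1 t2 t3 + 4)] by case: pent i_lt; layout_lia t1 t2 t3.
case/orP=> [/eqP|]; first exact: CenterVertex.
case/orP=> [|]; first exact: TriangleVertex.
case/orP=> [/andP[? /eqP]|]; first exact: HubVertex.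
case/orP=> [|]; first exact: SpokeVertex.
case/orP=> [/andP[]|]; first exact: PoleVertex.
case/orP=> [|/andP[]]; [exact: LeafVertex | exact: PentagonVertex].
Qed.

Lemma uniq_cat_sep (s1 s2 : seq nat) m : uniq s1 -> uniq s2 ->
  all (fun j => j < m) s1 -> all (fun j => m <= j) s2 -> uniq (s1 ++ s2).
Proof.
move=> u1 u2 a1 a2; rewrite cat_uniq u1 u2 andbT /=; apply/hasPn => j /(allP a2) /= h2.
by apply/negP => /(allP a1) /=; lia.
Qed.

Lemma uniq_pair (x y : nat) : x != y -> uniq [:: x; y].
Proof. by move=> h; rewrite /= inE h. Qed.

Local Open Scope ring_scope.

(* Perron-type bound: if a nonnegative matrix has a positive left eigenvector
   v for r, then comparing any eigenvector w with v at an index maximising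
   |w_k| / v_k gives |x| <= r for every eigenvalue x. *)
Lemma positive_left_eigenvector_largest (R : realType) n (A : 'M[R]_n) (v : 'I_n -> R) r :
  (0 < n)%N -> (forall i j, 0 <= A i j) -> (forall i, 0 < v i) ->
  (forall j, \sum_i v i * A i j = r * v j) -> is_largest_eigenvalue A r.
Proof.
move=> n_gt0 A_ge0 v_gt0 vA; split.
  apply/eigenvalueP; exists (\row_j v j).
    by apply/rowP => j; rewrite !mxE -vA; apply: eq_bigr => i _; rewrite mxE.
  by apply/eqP => /rowP /(_ (Ordinal n_gt0)); rewrite !mxE => /eqP; rewrite gt_eqF.
move=> x /eigenvalueP [w wA w_neq0].
pose ratio k := `|w 0 k| / v k.
have [j _ ratio_max] := @arg_maxP _ R 'I_n (Ordinal n_gt0) predT ratio erefl.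
have w_le k : `|w 0 k| <= ratio j * v k by rewrite -ler_pdivrMr //; exact: ratio_max.
have wj_gt0 : 0 < `|w 0 j|.
  rewrite lt_def normr_ge0 andbT normr_eq0; apply: contra w_neq0 => /eqP wj0.
  apply/eqP/rowP => k; rewrite mxE; apply/eqP; rewrite -normr_le0.
  by have := w_le k; rewrite /ratio wj0 normr0 !mul0r.
have : `|x| * `|w 0 j| <= r * `|w 0 j|.
  have -> : `|x| * `|w 0 j| = `|\sum_k w 0 k * A k j|.
    by move/rowP: wA => /(_ j); rewrite !mxE => ->; rewrite normrM.
  apply: (le_trans (ler_norm_sum _ _ _)).
  apply: (@le_trans _ _ (\sum_k ratio j * (v k * A k j))).
    by apply: ler_sum => k _; rewrite normrM (ger0_norm (A_ge0 _ _)) mulrA ler_wpM2r.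
  by rewrite -mulr_sumr vA mulrCA /ratio mulfVK ?gt_eqF.
by rewrite ler_pM2r // => /(le_trans (ler_norm x)).
Qed.

Lemma adj_mx_col_sum (R : nzRingType) n E (v : nat -> R) (j : 'I_n) (L : seq nat) :
  uniq L -> (forall i, (i \in L) = adjacent E j i) ->
  (forall i, adjacent E j i -> (i < n)%N) ->
  \sum_(i < n) v i * adj_mx R n E i j = \sum_(i <- L) v i.
Proof.
move=> L_uniq memL boundL.
transitivity (\sum_(i < n | (i : nat) \in L) v i).
  rewrite [RHS]big_mkcond; apply: eq_bigr => i _.
  rewrite mxE memL /adjacent orbC.
  by case: ((_, _) \in E); [|case: ((_, _) \in E)]; rewrite ?mulr1 ?mulr0.
rewrite -(big_mkord (fun i => i \in L) v) -big_filter.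
apply: perm_big; apply: uniq_perm; rewrite ?filter_uniq ?iota_uniq // => i.
by rewrite mem_filter mem_iota add0n subn0 andb_idr // memL => /boundL.
Qed.

(* The vector on the vertices of G with value 1 at u* and a common value on
   each other class; far is the value at w1, w2 and near the value at w3, w4. *)
Section ClassVector.
Variables (R : comNzRingType) (t1 t2 t3 : nat).
Variables (tri hub spoke pole leaf far near : R).
Local Notation B := (F0_B t1).
Local Notation C := (F0_C t1 t2).
Local Notation N := (F0_n t1 t2 t3).

Definition class_vector (j : nat) : R :=
  if j == 0%N then 1 else if (j < B)%N then tri
  else if (j < C)%N then (if j == B then hub else spoke)
  else if (j < N)%N then (if (j < C + 2)%N then pole else leaf)
  else if (j < N + 2)%N then far else near.

Local Notation V := class_vector.

Ltac eval_class_vector := rewrite /class_vector; generalize_layout t1 t2 t3 => *;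
  repeat (case: ifP => ?); try reflexivity; exfalso; split_hyps; lia.

Lemma class_vector_center : V 0 = 1. Proof. by rewrite /class_vector eqxx. Qed.
Lemma class_vector_tri j : (0 < j < B)%N -> V j = tri. Proof. eval_class_vector. Qed.
Lemma class_vector_hub : (0 < t2)%N -> V B = hub. Proof. eval_class_vector. Qed.
Lemma class_vector_spoke j : (B < j < C)%N -> V j = spoke. Proof. eval_class_vector. Qed.
Lemma class_vector_pole j : (0 < t3)%N -> (C <= j < C + 2)%N -> V j = pole.
Proof. eval_class_vector. Qed.
Lemma class_vector_leaf j : (C + 2 <= j < N)%N -> V j = leaf. Proof. eval_class_vector. Qed.
Lemma class_vector_far j : (N <= j < N + 2)%N -> V j = far. Proof. eval_class_vector. Qed.
Lemma class_vector_near j : (N + 2 <= j)%N -> V j = near. Proof. eval_class_vector. Qed.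

End ClassVector.

Lemma class_vector_gt0 (R : numDomainType) t1 t2 t3 (tri hub spoke pole leaf far near : R) j :
  0 < tri -> ((0 < t2)%N -> 0 < hub) -> 0 < spoke -> 0 < pole -> 0 < leaf ->
  0 < far -> 0 < near -> 0 < class_vector t1 t2 t3 tri hub spoke pole leaf far near j.
Proof.
move=> ? hub_gt0 ? ? ? ? ?; rewrite /class_vector.
case: ifP => [_|j0]; first exact: ltr01.
case: ifP => // jB; case: ifP => jC; last by do 3?case: ifP.
case: ifP => // /eqP jE; apply: hub_gt0; move: jB jC; rewrite jE; layout_lia t1 t2 t3.
Qed.

Lemma sum_iota_const (R : nzRingType) (v : nat -> R) a k c :
  (forall j, (a <= j < a + k)%N -> v j = c) -> \sum_(j <- iota a k) v j = k%:R * c.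
Proof.
move=> vc; rewrite (eq_big_seq (fun _ => c)); last by move=> j; rewrite mem_iota => /vc.
by rewrite big_const_seq count_predT size_iota iter_addr_0 mulr_natl.
Qed.

Lemma sum_opt_pair (R : nzRingType) (v : nat -> R) b x :
  \sum_(j <- opt_pair b x) v j = if b then v x + v (x + 1)%N else 0.
Proof. by case: b; rewrite /opt_pair ?big_cons ?big_nil ?addr0. Qed.

Lemma sum_pair (R : nzRingType) (v : nat -> R) x y : \sum_(j <- [:: x; y]) v j = v x + v y.
Proof. by rewrite !big_cons big_nil addr0. Qed.

Section QuotientEquations.
Variables (R : comNzRingType) (t1 t2 t3 : nat) (pent : bool).
Variables (tri hub spoke pole leaf far near r : R).
Local Notation n := (G_n t1 t2 t3 pent).
Local Notation E := (G_edges t1 t2 t3 pent).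
Local Notation A := (adj_mx R n E).
Local Notation V := (class_vector t1 t2 t3 tri hub spoke pole leaf far near).
Local Notation B := (F0_B t1).
Local Notation C := (F0_C t1 t2).
Local Notation N := (F0_n t1 t2 t3).

Hypotheses (tri_eq : r * tri = 1 + tri)
  (hub_eq : r * hub = t2%:R * spoke) (spoke_eq : r * spoke = 1 + hub)
  (pole_eq : r * pole = 1 + t3%:R * leaf) (leaf_eq : r * leaf = pole + pole)
  (far_eq : r * far = far + near) (near_eq : r * near = 1 + far)
  (center_eq : r = (2 * t1)%:R * tri + t2%:R * spoke
     + (if (0 < t3)%N then pole + pole else 0) + (if pent then near + near else 0)).

Lemma G_col_sum (j : 'I_n) L : uniq L -> (forall i, (i \in L) = adjacent E j i) ->
  \sum_(i < n) V i * A i j = \sum_(i <- L) V i.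
Proof. by move=> ? ?; apply: adj_mx_col_sum => // i; apply: G_adjacent_lt. Qed.

Ltac bound_list := apply/allP => ?;
  rewrite ?mem_cat ?mem_iota ?mem_opt_pair ?in_cons ?in_nil; layout_lia t1 t2 t3.

Lemma eigen_center (j : 'I_n) : j = 0%N :> nat -> \sum_(i < n) V i * A i j = r * V j.
Proof.
move=> j0; rewrite (@G_col_sum j (iota 1 (2 * t1) ++ iota (B + 1) t2 ++
  opt_pair (0 < t3)%N C ++ opt_pair pent (N + 2))); last 2 first.
- apply: (@uniq_cat_sep _ _ B); rewrite ?iota_uniq //; try by bound_list.
  apply: (@uniq_cat_sep _ _ C); rewrite ?iota_uniq //; try by bound_list.
  by apply: (@uniq_cat_sep _ _ N); rewrite ?uniq_opt_pair //; bound_list.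
- by move=> i; rewrite j0; apply: nbr_center.
rewrite !big_cat /= !sum_opt_pair (@sum_iota_const _ _ _ _ tri); last first.
  by move=> i ?; apply: class_vector_tri; layout_lia t1 t2 t3.
rewrite (@sum_iota_const _ _ _ _ spoke); last first.
  by move=> i ?; apply: class_vector_spoke; layout_lia t1 t2 t3.
rewrite j0 class_vector_center mulr1 [RHS]center_eq.
have poles : (0 < t3)%N -> V C + V (C + 1)%N = pole + pole.
  by move=> ?; rewrite !class_vector_pole //; layout_lia t1 t2 t3.
have nears : pent -> V (N + 2)%N + V (N + 2 + 1)%N = near + near.
  by move=> _; rewrite !class_vector_near //; lia.
by case: ifP => ?; case: (boolP pent) => ?; rewrite ?poles ?nears //; ring.
Qed.

Lemma eigen_triangle (j : 'I_n) : (0 < j < B)%N -> \sum_(i < n) V i * A i j = r * V j.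
Proof.
move=> jT; rewrite (@G_col_sum j [:: 0%N; (j + 2 * (j %% 2) - 1)%N]); last 2 first.
- by apply: uniq_pair; layout_lia t1 t2 t3.
- by move=> i; apply: nbr_triangle.
by rewrite sum_pair class_vector_center !class_vector_tri ?tri_eq //; layout_lia t1 t2 t3.
Qed.

Lemma eigen_hub (j : 'I_n) : (0 < t2)%N -> j = B :> nat -> \sum_(i < n) V i * A i j = r * V j.
Proof.
move=> t2_gt0 jB; rewrite (@G_col_sum j (iota (B + 1) t2)); last 2 first.
- exact: iota_uniq.
- by move=> i; rewrite jB; apply: nbr_hub.
rewrite (@sum_iota_const _ _ _ _ spoke); last first.
  by move=> i ?; apply: class_vector_spoke; layout_lia t1 t2 t3.
by rewrite jB class_vector_hub // hub_eq.
Qed.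

Lemma eigen_spoke (j : 'I_n) : (B < j < C)%N -> \sum_(i < n) V i * A i j = r * V j.
Proof.
move=> jS; rewrite (@G_col_sum j [:: 0%N; B]); last 2 first.
- by apply: uniq_pair; layout_lia t1 t2 t3.
- by move=> i; apply: nbr_spoke.
have t2_gt0 : (0 < t2)%N by layout_lia t1 t2 t3.
by rewrite sum_pair class_vector_center class_vector_hub // class_vector_spoke // spoke_eq.
Qed.

Lemma eigen_pole (j : 'I_n) : (0 < t3)%N -> (C <= j < C + 2)%N ->
  \sum_(i < n) V i * A i j = r * V j.
Proof.
move=> t3_gt0 jP; rewrite (@G_col_sum j (0%N :: iota (C + 2) t3)); last 2 first.
- by rewrite cons_uniq iota_uniq andbT mem_iota; layout_lia t1 t2 t3.
- by move=> i; apply: nbr_pole.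
rewrite big_cons class_vector_center (@sum_iota_const _ _ _ _ leaf); last first.
  by move=> i ?; apply: class_vector_leaf; layout_lia t1 t2 t3.
by rewrite class_vector_pole // pole_eq.
Qed.

Lemma eigen_leaf (j : 'I_n) : (C + 2 <= j < N)%N -> \sum_(i < n) V i * A i j = r * V j.
Proof.
move=> jL; rewrite (@G_col_sum j [:: C; (C + 1)%N]); last 2 first.
- by apply: uniq_pair; lia.
- by move=> i; apply: nbr_leaf.
have t3_gt0 : (0 < t3)%N by layout_lia t1 t2 t3.
have -> : V j = leaf by apply: class_vector_leaf.
by rewrite sum_pair !class_vector_pole // ?leaf_eq; lia.
Qed.

Lemma eigen_pentagon (j : 'I_n) : pent -> (N <= j < N + 4)%N ->
  \sum_(i < n) V i * A i j = r * V j.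
Proof.
move=> pentT jW; have Ep : E = G_edges t1 t2 t3 true by rewrite pentT.
have Vfar k : (N <= k < N + 2)%N -> V k = far by apply: class_vector_far.
have Vnear k : (N + 2 <= k)%N -> V k = near by apply: class_vector_near.
have : [|| j == N :> nat, j == (N + 1)%N :> nat, j == (N + 2)%N :> nat | j == (N + 3)%N :> nat]
  by lia.
case/or4P => /eqP jw.
- rewrite (@G_col_sum j [:: (N + 1)%N; (N + 2)%N]); last 2 first.
  + by apply: uniq_pair; lia.
  + by move=> i; rewrite Ep jw; apply: nbr_w1.
  by rewrite sum_pair jw (Vfar N) ?(Vfar (N + 1)%N) ?(Vnear (N + 2)%N) ?far_eq //; lia.
- rewrite (@G_col_sum j [:: N; (N + 3)%N]); last 2 first.
  + by apply: uniq_pair; lia.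
  + by move=> i; rewrite Ep jw; apply: nbr_w2.
  by rewrite sum_pair jw (Vfar N) ?(Vfar (N + 1)%N) ?(Vnear (N + 3)%N) ?far_eq //; lia.
- rewrite (@G_col_sum j [:: 0%N; N]); last 2 first.
  + by apply: uniq_pair; layout_lia t1 t2 t3.
  + by move=> i; rewrite Ep jw; apply: nbr_w3.
  by rewrite sum_pair jw class_vector_center (Vfar N) ?(Vnear (N + 2)%N) ?near_eq //; lia.
- rewrite (@G_col_sum j [:: 0%N; (N + 1)%N]); last 2 first.
  + by apply: uniq_pair; layout_lia t1 t2 t3.
  + by move=> i; rewrite Ep jw; apply: nbr_w4.
  by rewrite sum_pair jw class_vector_center (Vfar (N + 1)%N) ?(Vnear (N + 3)%N) ?near_eq //; lia.
Qed.

Lemma class_vector_eigen (j : 'I_n) : \sum_(i < n) V i * A i j = r * V j.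
Proof.
case: (vertex_classP (ltn_ord j)).
- exact: eigen_center.
- exact: eigen_triangle.
- exact: eigen_hub.
- exact: eigen_spoke.
- exact: eigen_pole.
- exact: eigen_leaf.
- exact: eigen_pentagon.
Qed.

End QuotientEquations.

(* The secular function of G and its fixed points, over any real closed
   field (only the intermediate value theorem and square roots are used). *)
Section Secular.
Variable R : rcfType.

(* The weight 2 of an optional pair of vertices adjacent to u*. *)
Definition twice_if (b : bool) : R := if b then 2 else 0.

(* Contributions to the centre equation of the triangles, of the spokes of
   the K_{2,t2}, of the two poles of the K_{2,t3+1} and of w3, w4, once the
   other quotient equations are solved for eigenvalue x. *)
Definition secular (t1 t2 t3 : nat) (pent : bool) (x : R) : R :=
  2 * t1%:R / (x - 1) + t2%:R * x / (x ^+ 2 - t2%:R)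
  + twice_if (0 < t3)%N * x / (x ^+ 2 - 2 * t3%:R)
  + twice_if pent * (x - 1) / (x ^+ 2 - x - 1).

Definition admissible (t2 t3 : nat) (x : R) : Prop :=
  [/\ 1 < x, t2%:R < x ^+ 2, 2 * t3%:R < x ^+ 2 & 0 < x ^+ 2 - x - 1].

Lemma admissible_mono t2 t3 (x y : R) : admissible t2 t3 x -> x <= y -> admissible t2 t3 y.
Proof.
move=> [x1 x2 x3 x4] xy; have sq : x ^+ 2 <= y ^+ 2 by nra.
by split; [exact: lt_le_trans xy | exact: lt_le_trans sq | exact: lt_le_trans sq | nra].
Qed.

Lemma admissible_neq0 t2 t3 (x : R) : admissible t2 t3 x ->
  [/\ x - 1 != 0, x ^+ 2 - t2%:R != 0, x ^+ 2 - 2 * t3%:R != 0 & x ^+ 2 - x - 1 != 0].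
Proof. by case=> x1 x2 x3 x4; split; rewrite gt_eqF // ?subr_gt0. Qed.

(* Clearing denominators turns the fixed-point equation into a polynomial
   root, so that the intermediate value theorem applies. *)
Definition secular_denom (t2 t3 : nat) (x : R) : R :=
  (x - 1) * (x ^+ 2 - t2%:R) * (x ^+ 2 - 2 * t3%:R) * (x ^+ 2 - x - 1).

Lemma secular_denom_gt0 t2 t3 (x : R) : admissible t2 t3 x -> 0 < secular_denom t2 t3 x.
Proof. by case=> x1 x2 x3 x4; rewrite /secular_denom !mulr_gt0 // subr_gt0. Qed.

Definition secular_poly (t1 t2 t3 : nat) (pent : bool) : {poly R} :=
  let D1 := 'X - 1 in let D2 := 'X ^+ 2 - (t2%:R)%:P in
  let D3 := 'X ^+ 2 - (2 * t3%:R)%:P in let D4 := 'X ^+ 2 - 'X - 1 in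
  'X * (D1 * D2 * D3 * D4) - ((2 * t1%:R)%:P * (D2 * D3 * D4)
   + (t2%:R)%:P * 'X * (D1 * D3 * D4) + (twice_if (0 < t3)%N)%:P * 'X * (D1 * D2 * D4)
   + (twice_if pent)%:P * ('X - 1) * (D1 * D2 * D3)).

Lemma secular_polyE t1 t2 t3 pent (x : R) : admissible t2 t3 x ->
  (secular_poly t1 t2 t3 pent).[x] = (x - secular t1 t2 t3 pent x) * secular_denom t2 t3 x.
Proof.
move=> /admissible_neq0 [n1 n2 n3 n4].
rewrite /secular_poly /secular_denom /secular.
rewrite !(hornerD, hornerN, hornerM, hornerX, hornerC, horner_exp).
by move: (twice_if _) (twice_if _) => e3 ep; field; rewrite ?n1 ?n2 ?n3 ?n4.
Qed.

Lemma secular_fixed_point t1 t2 t3 pent (lo hi : R) : lo <= hi -> admissible t2 t3 lo ->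
  lo <= secular t1 t2 t3 pent lo -> secular t1 t2 t3 pent hi <= hi ->
  exists2 x, lo <= x <= hi & secular t1 t2 t3 pent x = x.
Proof.
move=> lohi adm_lo lo_le le_hi.
have adm_hi := admissible_mono adm_lo lohi.
have [x /andP[lox xhi] px0] : exists2 x, lo <= x <= hi & root (secular_poly t1 t2 t3 pent) x.
  apply: poly_ivt => //; rewrite !secular_polyE //; apply/andP; split.
    by rewrite pmulr_lle0 ?secular_denom_gt0 // subr_le0.
  by rewrite pmulr_lge0 ?secular_denom_gt0 // subr_ge0.
exists x; first by rewrite lox xhi.
have adm_x := admissible_mono adm_lo lox.
move: px0; rewrite /root secular_polyE // mulf_eq0 (gt_eqF (secular_denom_gt0 adm_x)) orbF.
by rewrite subr_eq0 => /eqP.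
Qed.

End Secular.

Section SecularBounds.
Variable R : rcfType.

(* Far enough to the right, secular is below the identity: each branch
   contributes at most its number of neighbours of u*. *)
Lemma secular_le_large t1 t2 t3 pent (x : R) : (2 * t1 + 2 * t2 + 2 * t3 + 4)%N%:R <= x ->
  secular t1 t2 t3 pent x <= x.
Proof.
rewrite /secular !natrD ?natrM => hx.
have u1 : 0 <= t1%:R :> R by apply: ler0n.
have u2 : 0 <= t2%:R :> R by apply: ler0n.
have u3 : 0 <= t3%:R :> R by apply: ler0n.
have /andP[e3a e3b] : 0 <= twice_if R (0 < t3)%N <= 2 by rewrite /twice_if; case: ifP; lra.
have /andP[epa epb] : 0 <= twice_if R pent <= 2 by rewrite /twice_if; case: ifP; lra.
move: (twice_if R (0 < t3)%N) (twice_if R pent) e3a e3b epa epb => e3 ep e3a e3b epa epb.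
move: (t1%:R) (t2%:R) (t3%:R) u1 u2 u3 hx => v1 v2 v3 u1 u2 u3 hx.
have p1 : 0 < x - 1 by lra.
have p2 : 0 < x ^+ 2 - v2 by nra.
have p3 : 0 < x ^+ 2 - 2 * v3 by nra.
have p4 : 0 < x ^+ 2 - x - 1 by nra.
have hx2 : x <= x ^+ 2 - x by nra.
have b1 : 2 * v1 / (x - 1) <= 2 * v1.
  rewrite ler_pdivrMr //; have : 0 <= v1 * (x - 2) by apply: mulr_ge0; lra.
  lra.
have b2 : v2 * x / (x ^+ 2 - v2) <= v2.
  rewrite ler_pdivrMr //; have : 0 <= v2 * (x ^+ 2 - x - v2) by apply: mulr_ge0; nra.
  lra.
have b3 : e3 * x / (x ^+ 2 - 2 * v3) <= 2.
  rewrite ler_pdivrMr //; have : 0 <= (2 - e3) * x by apply: mulr_ge0; lra.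
  lra.
have b4 : ep * (x - 1) / (x ^+ 2 - x - 1) <= 2.
  rewrite ler_pdivrMr //; have : 0 <= (2 - ep) * (x - 1) by apply: mulr_ge0; lra.
  lra.
lra.
Qed.

(* At a point x >= 2 where a single branch already contributes x (the other
   contributions being nonnegative), secular x >= x. *)
Lemma secular_ge_branch t1 t2 t3 (x : R) :
  2 <= x -> 2 * t2%:R <= x ^+ 2 -> 2 * t3%:R + 2 <= x ^+ 2 -> 2 * t1%:R <= x ^+ 2 - x ->
  [\/ x = 2, x ^+ 2 = 2 * t2%:R, x ^+ 2 = 2 * t3%:R + 2 | x ^+ 2 - x = 2 * t1%:R] ->
  x <= secular t1 t2 t3 true x.
Proof.
move=> h1 h2 h3 h4 hc.
have u1 : 0 <= t1%:R :> R by apply: ler0n.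
have u2 : 0 <= t2%:R :> R by apply: ler0n.
have u3 : 0 <= t3%:R :> R by apply: ler0n.
have p1 : 0 < x - 1 by lra.
have p2 : 0 < x ^+ 2 - t2%:R by nra.
have p3 : 0 < x ^+ 2 - 2 * t3%:R by nra.
have p4 : 0 < x ^+ 2 - x - 1 by nra.
have e3_ge0 : 0 <= twice_if R (0 < t3)%N by rewrite /twice_if; case: ifP.
have T1 : 0 <= 2 * t1%:R / (x - 1) by rewrite divr_ge0 //; lra.
have T2 : 0 <= t2%:R * x / (x ^+ 2 - t2%:R) by rewrite divr_ge0 //; nra.
have T3 : 0 <= twice_if R (0 < t3)%N * x / (x ^+ 2 - 2 * t3%:R) by rewrite divr_ge0 //; nra.
have T4 : 0 <= twice_if R true * (x - 1) / (x ^+ 2 - x - 1) by rewrite divr_ge0 //=; nra.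
rewrite /secular; case: hc => hx.
- suff : x <= twice_if R true * (x - 1) / (x ^+ 2 - x - 1) by lra.
  by rewrite ler_pdivlMr // /twice_if hx; lra.
- suff : x <= t2%:R * x / (x ^+ 2 - t2%:R) by lra.
  by rewrite ler_pdivlMr //; nra.
- have t3_gt0 : (0 < t3)%N.
    by rewrite lt0n; apply/negP => /eqP t30; move: hx; rewrite t30 mulr0 add0r => hx; nra.
  suff : x <= twice_if R (0 < t3)%N * x / (x ^+ 2 - 2 * t3%:R) by lra.
  by rewrite ler_pdivlMr // /twice_if t3_gt0; nra.
- suff : x <= 2 * t1%:R / (x - 1) by lra.
  by rewrite ler_pdivlMr //; nra.
Qed.

Lemma max_witness (a b : R) : exists m, [/\ m = a \/ m = b, a <= m & b <= m].
Proof.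
case: (leP a b) => ab; first by exists b; split => //; right.
by exists a; split => //; [left | apply: ltW].
Qed.

(* A starting point for the search of the fixed point of the graph F_1:
   the largest of 2 and the positive solutions of x^2 = 2 t2,
   x^2 = 2 t3 + 2 and x^2 - x = 2 t1. *)
Lemma secular_start t1 t2 t3 : exists x : R,
  [/\ 2 <= x, 2 * t2%:R <= x ^+ 2, 2 * t3%:R + 2 <= x ^+ 2 & x <= secular t1 t2 t3 true x].
Proof.
have u1 : 0 <= t1%:R :> R by apply: ler0n.
have u2 : 0 <= t2%:R :> R by apply: ler0n.
have u3 : 0 <= t3%:R :> R by apply: ler0n.
pose c2 := Num.sqrt (2 * t2%:R : R).
pose c3 := Num.sqrt (2 * t3%:R + 2 : R).
pose S := Num.sqrt (1 + 8 * t1%:R : R).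
pose c1 := (1 + S) / 2.
have hc2 : c2 ^+ 2 = 2 * t2%:R by rewrite sqr_sqrtr //; lra.
have hc3 : c3 ^+ 2 = 2 * t3%:R + 2 by rewrite sqr_sqrtr //; lra.
have hS : S ^+ 2 = 1 + 8 * t1%:R by rewrite sqr_sqrtr //; lra.
have g2 : 0 <= c2 by apply: sqrtr_ge0.
have g3 : 0 <= c3 by apply: sqrtr_ge0.
have gS : 0 <= S by apply: sqrtr_ge0.
have hc1 : c1 ^+ 2 - c1 = 2 * t1%:R.
  rewrite /c1; have -> : ((1 + S) / 2) ^+ 2 - (1 + S) / 2 = (S ^+ 2 - 1) / 4 by field.
  by rewrite hS; field.
have g1 : 1 / 2 <= c1 by rewrite /c1; lra.
have [m1 [e1 m1a m1b]] := max_witness c3 c1.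
have [m2 [e2 m2a m2b]] := max_witness c2 m1.
have [x [ex xa xb]] := max_witness 2 m2.
exists x; split; [lra | nra | nra | apply: secular_ge_branch; try nra].
case: ex => [->|ex]; first by constructor 1.
case: e2 => [e2|e2]; rewrite ex e2; first by constructor 2.
by case: e1 => ->; [constructor 3 | constructor 4].
Qed.

Lemma secular_gap t1 t2 t3 (x : R) : 2 <= x -> t2.+1%:R < x ^+ 2 -> admissible t2 t3 x ->
  secular t1 t2 t3 true x < secular t1.+1 t2.+1 t3 false x.
Proof.
move=> x2 t2x adm; have [n1 n2 n3 n4] := admissible_neq0 adm.
have p5 : 0 < x ^+ 2 - t2%:R - 1 by rewrite -addrA -opprD natr1 subr_gt0.
have gapE : secular t1.+1 t2.+1 t3 false x - secular t1 t2 t3 true x =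
   2 * (x - 2) / ((x - 1) * (x ^+ 2 - x - 1))
   + x ^+ 3 / ((x ^+ 2 - t2%:R) * (x ^+ 2 - t2%:R - 1)).
  rewrite /secular /twice_if -!natr1; move: (if _ then _ else _) => e3.
  by field; rewrite ?n1 ?n2 ?n3 ?n4 ?gt_eqF.
have p1 : 0 < x - 1 by lra.
have p4 : 0 < x ^+ 2 - x - 1 by nra.
have p2 : 0 < x ^+ 2 - t2%:R by lra.
have gap1 : 0 <= 2 * (x - 2) / ((x - 1) * (x ^+ 2 - x - 1)) by rewrite divr_ge0 //; nra.
have gap2 : 0 < x ^+ 3 / ((x ^+ 2 - t2%:R) * (x ^+ 2 - t2%:R - 1)).
  have x3 : 0 < x ^+ 3 by apply: exprn_gt0; lra.
  by rewrite divr_gt0 // mulr_gt0.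
by rewrite -subr_gt0 gapE; lra.
Qed.

End SecularBounds.

Section SpectralRadius.
Variable R : realType.

(* An admissible fixed point x is the largest eigenvalue of G: the class
   vector with the values solving the quotient equations for x is a positive
   left eigenvector. *)
Lemma fixed_point_largest t1 t2 t3 pent (x : R) :
  admissible t2 t3 x -> secular t1 t2 t3 pent x = x ->
  is_largest_eigenvalue (adj_mx R (G_n t1 t2 t3 pent) (G_edges t1 t2 t3 pent)) x.
Proof.
move=> adm x_fix; have [n1 n2 n3 n4] := admissible_neq0 adm.
case: adm => x1 x2 x3 x4.
have p1 : 0 < x - 1 by rewrite subr_gt0.
have p2 : 0 < x ^+ 2 - t2%:R by rewrite subr_gt0.
have p3 : 0 < x ^+ 2 - 2 * t3%:R by rewrite subr_gt0.
have x_gt0 : 0 < x by apply: lt_trans x1.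
pose tri := (x - 1)^-1.
pose spoke := x / (x ^+ 2 - t2%:R).
pose hub := t2%:R / (x ^+ 2 - t2%:R).
pose pole := x / (x ^+ 2 - 2 * t3%:R).
pose leaf := 2 / (x ^+ 2 - 2 * t3%:R).
pose far := (x ^+ 2 - x - 1)^-1.
pose near := (x - 1) / (x ^+ 2 - x - 1).
apply: (@positive_left_eigenvector_largest _ _ _
  (fun i => class_vector t1 t2 t3 tri hub spoke pole leaf far near i)).
- exact: G_n_gt0.
- by move=> i j; rewrite mxE; do 2?case: ifP.
- move=> i; apply: class_vector_gt0 => [|?|||||];
    by rewrite ?invr_gt0 ?divr_gt0 ?ltr0n.
- move=> j; apply: class_vector_eigen; rewrite /tri /spoke /hub /pole /leaf /far /near;
    try by field.
  rewrite -{1}x_fix /secular /twice_if natrM.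
  by case: (0 < t3)%N; case: (pent); field; rewrite ?n1 ?n2 ?n3 ?n4.
Qed.

Lemma spectral_radius_above t1 t2 t3 pent (lo : R) :
  admissible t2 t3 lo -> lo <= secular t1 t2 t3 pent lo ->
  exists r, [/\ lo <= r, secular t1 t2 t3 pent r = r &
    is_largest_eigenvalue (adj_mx R (G_n t1 t2 t3 pent) (G_edges t1 t2 t3 pent)) r].
Proof.
move=> lo_adm lo_le.
have [hi [_ lo_hi big_hi]] := max_witness lo (2 * t1 + 2 * t2 + 2 * t3 + 4)%N%:R.
have [r /andP[lo_r _] r_fix] :=
  secular_fixed_point lo_hi lo_adm lo_le (@secular_le_large _ t1 t2 t3 pent hi big_hi).
by exists r; split => //; apply: fixed_point_largest r_fix; apply: admissible_mono lo_r.
Qed.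

End SpectralRadius.

Theorem proposition4p2 (R : realType) (t1 t2 t3 : nat)
    (ht2 : t2 = 0%N \/ (2 <= t2)%N) :
  exists rho1 rho0 : R,
    [/\ is_largest_eigenvalue (A_F1 R t1 t2 t3) rho1,
        is_largest_eigenvalue (A_F0 R t1.+1 t2.+1 t3) rho0
      & rho1 < rho0].
Proof.
have [lo [lo_ge2 lo_t2 lo_t3 lo_le]] := secular_start R t1 t2 t3.
have lo_sq : 4 <= lo ^+ 2 by nra.
have t2_ge0 : 0 <= t2%:R :> R by apply: ler0n.
have lo_adm : admissible t2 t3 lo by split; [lra | lra | lra | nra].
have [r1 [lo_r1 r1_fix rho1]] := spectral_radius_above lo_adm lo_le.
have r1_adm := admissible_mono lo_adm lo_r1.
have r1_sq : lo ^+ 2 <= r1 ^+ 2 by nra.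
have r1_t2 : t2.+1%:R < r1 ^+ 2.
  rewrite -natr1; case: ht2 => [->|t2_ge2]; first by rewrite add0r; lra.
  have : 2 <= t2%:R :> R by rewrite ler_nat.
  lra.
have gap : r1 < secular t1.+1 t2.+1 t3 false r1.
  by rewrite -{1}r1_fix secular_gap //; lra.
have r1_adm_next : admissible t2.+1 t3 r1 by case: r1_adm.
have [r0 [r1_r0 r0_fix rho0]] := spectral_radius_above r1_adm_next (ltW gap).
exists r1, r0; split => //.
by rewrite lt_neqAle r1_r0 andbT; apply: contraTneq gap => ->; rewrite r0_fix ltxx.
Qed.
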